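(* Let $\mathbf{x}=(\ldots,x_{-1},x_0,x_1,\ldots)$ be commuting indeterminates indexed by $\mathbb{Z}$. Let $T=(t_{ij})$ be an $\mathbb{N}$-tableau of shape $\lambda$ and let $\widehat{T}$ be its image under the toggle map defined in the context. Then \[|\widehat{T}|_{\mathbf{x}}=\sum_{(i,j)\in\lambda}t_{ij}\,h_{\lambda}(i,j;\mathbf{x}).\]
   Context: Partitions are drawn in English notation with matrix coordinates: the box in row $i$ and column $j$ is $(i,j)$. An $\mathbb{N}$-tableau of shape $\lambda$ is an assignment of a nonnegative integer to each box of $\lambda$. The hook $H_\lambda(i,j)$ is the set of boxes $(i,j')\in\lambda$ with $j'\ge j$ together with the boxes $(i',j)\in\lambda$ with $i'\ge i$. The $\mathbf{x}$-hook-length is $h_\lambda(i,j;\mathbf{x})=\sum_{(i',j')\in H_\lambda(i,j)}x_{j'-i'}$, and the $\mathbf{x}$-weight of an $\mathbb{N}$-tableau $S=(s_{ij})$ of shape $\lambda$ is $|S|_{\mathbf{x}}=\sum_{(i,j)\in\lambda}s_{ij}x_{j-i}$. A corner box is a box $(i,j)$ such that neither $(i+1,j)$ nor $(i,j+1)$ is a box. The toggle map $T\mapsto\widehat{T}$ is defined recursively: $\widehat{\emptyset}=\emptyset$; if $T'$ is obtained from $T$ by adding a corner box $(i,j)$ (of $\mathrm{sh}(T')$) with entry $x$, then $\widehat{T'}$ is obtained from $\widehat{T}$ as follows. For $k\ge1$ let $\beta_k,\gamma_k,\alpha_k$ be the entries of $\widehat{T}$ at $(i-k,j-k)$, $(i-k+1,j-k)$,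 $(i-k,j-k+1)$ respectively (taken to be $0$ if the box is not in $\mathrm{sh}(T)$). Then $\widehat{T'}$ agrees with $\widehat{T}$ except that for $1\le k<\min(i,j)$ the entry at $(i-k,j-k)$ becomes $\max(\alpha_{k+1},\gamma_{k+1})+\min(\alpha_k,\gamma_k)-\beta_k$, and the entry at $(i,j)$ is $\max(\alpha_1,\gamma_1)+x$. This is independent of the order in which boxes are added. *)

(* Coordinates are 1-indexed: box (i,j), i = row, j = column. *)
From mathcomp Require Import all_boot all_order all_algebra.
Set Implicit Arguments. Unset Strict Implicit. Unset Printing Implicit Defensive.
Import GRing.Theory.
Local Open Scope ring_scope.

Definition is_partition (la : seq nat) : bool :=
  sorted geq la && all (fun n => (0 < n)%N) la.

Definition boxes (la : seq nat) : seq (nat * nat) :=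
  flatten [seq [seq (i, j) | j <- iota 1 (nth 0%N la i.-1)] | i <- iota 1 (size la)].

Definition in_hook (i j : nat) (b : nat * nat) : bool :=
  ((b.1 == i) && (j <= b.2)%N) || ((b.2 == j) && (i <= b.1)%N).

Definition xc (R : zmodType) (x : int -> R) (b : nat * nat) : R :=
  x ((b.2)%:Z - (b.1)%:Z).

Definition hooklen (R : zmodType) (x : int -> R) (la : seq nat) (i j : nat) : R :=
  \sum_(b <- boxes la | in_hook i j b) xc x b.

Definition weight (R : zmodType) (x : int -> R) (la : seq nat)
  (S : nat -> nat -> nat) : R :=
  \sum_(b <- boxes la) xc x b *+ S b.1 b.2.

Definition young_seq (p : seq (nat * nat)) : bool :=
  all (fun b => [&& (0 < b.1)%N, (0 < b.2)%N,
                   (b.1 == 1%N) || ((b.1.-1, b.2) \in p) &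
                   (b.2 == 1%N) || ((b.1, b.2.-1) \in p)]) p.

(* s is an order of adding the boxes of la one at a time such that every
   intermediate shape is a Young diagram (so each added box is a corner box
   of the new shape). *)
Definition building_seq (la : seq nat) (s : seq (nat * nat)) : Prop :=
  uniq s /\ perm_eq s (boxes la) /\ forall n, young_seq (take n s).

(* One step of the toggle map: p = boxes of sh(T), f = entries of \hat T,
   (i,j) = added corner box with entry e. Entries outside p read as 0. *)
Definition toggle_step (p : seq (nat * nat)) (f : nat -> nat -> nat)
  (b : nat * nat) (e : nat) : nat -> nat -> nat :=
  let i := b.1 in let j := b.2 in
  let get a c := if (a, c) \in p then f a c else 0%N in
  fun a c =>
    if (a == i) && (c == j) then (maxn (get i.-1 j) (get i j.-1) + e)%N
    else if [&& (0 < a)%N, (0 < c)%N, (a < i)%N & (i - a == j - c)%N] then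
      (* k = i - a, beta_k = get a c, alpha_k = get a c.+1, gamma_k = get a.+1 c,
         alpha_{k+1} = get a.-1 c, gamma_{k+1} = get a c.-1 *)
      (maxn (get a.-1 c) (get a c.-1) + minn (get a c.+1) (get a.+1 c) - get a c)%N
    else f a c.

Fixpoint toggle_rec (p : seq (nat * nat)) (f : nat -> nat -> nat)
  (s : seq (nat * nat)) (T : nat -> nat -> nat) : nat -> nat -> nat :=
  match s with
  | [::] => f
  | b :: s' => toggle_rec (rcons p b) (toggle_step p f b (T b.1 b.2)) s' T
  end.

Definition toggle (s : seq (nat * nat)) (T : nat -> nat -> nat) : nat -> nat -> nat :=
  toggle_rec [::] (fun _ _ => 0%N) s T.

(* Adding a corner box (i,j) with entry e changes \hat T only on the diagonal through (i,j), and
   the toggle formula telescopes along that diagonal: the new diagonal sum plus the old one is e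
   plus the sums along the two neighbouring diagonals.  Along a building sequence \hat T stays a
   reverse plane partition supported on the current shape, and its sum along the diagonal ending
   at a box (a,c) equals the sum of the entries of T in the rectangle [1,a] x [1,c].  By
   inclusion-exclusion the diagonal through (i,j) therefore gains e plus the entries of T whose
   hook contains (i,j), and both sides of the identity grow by x_{j-i} times this amount. *)

From mathcomp Require Import all_boot all_order all_algebra zify.
Set Implicit Arguments. Unset Strict Implicit. Unset Printing Implicit Defensive.
Import GRing.Theory.

Definition diag_sum (f : nat -> nat -> nat) (a c : nat) : nat :=
  \sum_(0 <= k < a) f (a - k) (c - k).

Definition rect_sum (T : nat -> nat -> nat) (p : seq (nat * nat)) (a c : nat) : nat :=
  \sum_(b <- p | (b.1 <= a) && (b.2 <= c)) T b.1 b.2.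

Definition box_weight (R : zmodType) (x : int -> R) (q : seq (nat * nat))
    (S : nat -> nat -> nat) : R :=
  (\sum_(b <- q) xc x b *+ S b.1 b.2)%R.

Definition hook_weight (R : zmodType) (x : int -> R) (q : seq (nat * nat))
    (T : nat -> nat -> nat) : R :=
  (\sum_(b <- q) (\sum_(b' <- q | in_hook b.1 b.2 b') xc x b') *+ T b.1 b.2)%R.

Section Young.
Variable q : seq (nat * nat).
Hypothesis Yq : young_seq q.

Lemma youngP a c : (a, c) \in q ->
  [/\ 0 < a, 0 < c, (a == 1) || ((a.-1, c) \in q) & (c == 1) || ((a, c.-1) \in q)].
Proof. by move/(allP Yq)/and4P. Qed.

Lemma young_pos a c : (a, c) \in q -> 0 < a /\ 0 < c.
Proof. by case/youngP. Qed.

Lemma young_closed a c a' c' : (a, c) \in q -> 0 < a' <= a -> 0 < c' <= c -> (a', c') \in q.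
Proof.
move=> qac /andP[a'0 le_a'a] /andP[c'0 le_c'c].
have {qac le_a'a} qa'c : (a', c) \in q.
  elim: a le_a'a qac => [|a IHa]; first by lia.
  rewrite leq_eqVlt ltnS => /orP[/eqP-> // | le_a'a] /youngP[_ _ /orP[/eqP a0 | qac] _].
    by lia.
  exact: IHa.
elim: c le_c'c qa'c => [|c IHc]; first by lia.
rewrite leq_eqVlt ltnS => /orP[/eqP-> // | le_c'c] /youngP[_ _ _ /orP[/eqP c0 | qac]].
  by lia.
exact: IHc.
Qed.

Lemma young_supp_row0 (h : nat -> nat -> nat) :
  (forall a c, (a, c) \notin q -> h a c = 0) -> forall c, h 0 c = 0.
Proof. by move=> hq c; apply: hq; apply/negP => /young_pos[]. Qed.

Lemma young_supp_col0 (h : nat -> nat -> nat) :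
  (forall a c, (a, c) \notin q -> h a c = 0) -> forall a, h a 0 = 0.
Proof. by move=> hq a; apply: hq; apply/negP => /young_pos[]. Qed.

End Young.

Lemma telescope_maxn_minn (al ga : nat -> nat) n : al n = 0 -> ga n = 0 ->
  maxn (al 0) (ga 0) + \sum_(0 <= k < n) (maxn (al k.+1) (ga k.+1) + minn (al k) (ga k))
  = \sum_(0 <= k < n) (al k + ga k).
Proof.
move=> al0 ga0; rewrite big_split /= addnA.
rewrite -(big_nat_recl _ _ (fun k => maxn (al k) (ga k))) // big_nat_recr //=.
rewrite al0 ga0 maxnn addn0 -big_split /=.
by apply: eq_bigr => k _; rewrite addnC addn_min_max.
Qed.

Lemma big_mem_supp (I : eqType) (q s : seq I) (h : I -> nat) :
  uniq q -> uniq s -> (forall b, b \notin q -> h b = 0) ->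
  \sum_(b <- q | b \in s) h b = \sum_(b <- s) h b.
Proof.
move=> Uq Us hq; rewrite [RHS](bigID (mem q)) /= [X in _ + X]big1 ?addn0; last first.
  by move=> b /hq.
rewrite -[LHS]big_filter -[RHS]big_filter; apply/perm_big/uniq_perm.
- exact: filter_uniq.
- exact: filter_uniq.
by move=> b; rewrite !mem_filter andbC.
Qed.

Section DiagSum.
Variable g : nat -> nat -> nat.
Hypothesis g0 : forall c, g 0 c = 0.

Lemma diag_sum_widen a c n : a <= n ->
  diag_sum g a c = \sum_(0 <= k < n) g (a - k) (c - k).
Proof.
move=> le_an; rewrite /diag_sum (big_cat_nat (leq0n a) le_an) /= -[LHS]addn0.
congr (_ + _); rewrite big_nat_cond big1 // => k /andP[/andP[le_ak _] _].
by rewrite (_ : a - k = 0) ?g0 //; lia.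
Qed.

Lemma diag_sum_recl a c : diag_sum g a c = g a c + diag_sum g a.-1 c.-1.
Proof.
case: a => [|a]; first by rewrite g0 /diag_sum !big_geq.
rewrite /diag_sum big_nat_recl // !subn0; congr (_ + _).
by apply: eq_bigr => k _; congr g; lia.
Qed.

Lemma diag_sum_up a c : diag_sum g a.-1 c = \sum_(0 <= k < a) g (a - k.+1) (c - k).
Proof. by rewrite (diag_sum_widen _ (leq_pred a)); apply: eq_bigr => k _; congr g; lia. Qed.

Lemma diag_sum_left a c : diag_sum g a c.-1 = \sum_(0 <= k < a) g (a - k) (c - k.+1).
Proof. by apply: eq_bigr => k _; congr g; lia. Qed.

Lemma diag_sum_upleft a c : diag_sum g a.-1 c.-1 = \sum_(0 <= k < a) g (a - k.+1) (c - k.+1).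
Proof. by rewrite diag_sum_up; apply: eq_bigr => k _; congr g; lia. Qed.

Lemma diag_sum_boundary a c : (forall a, g a 0 = 0) -> a = 0 \/ c = 0 -> diag_sum g a c = 0.
Proof.
move=> g0' [->|->]; first by rewrite /diag_sum big_geq.
by rewrite /diag_sum big1 // => k _; rewrite sub0n g0'.
Qed.

End DiagSum.

Lemma box_weight_split (R : zmodType) (x : int -> R) (q s : seq (nat * nat))
    (y : R) (h : nat -> nat -> nat) :
  uniq q -> uniq s -> (forall a c, (a, c) \notin q -> h a c = 0) ->
  (forall b, b \in q -> b \in s -> xc x b = y) ->
  box_weight x q h =
    (\sum_(b <- q | b \notin s) xc x b *+ h b.1 b.2 + y *+ \sum_(b <- s) h b.1 b.2)%R.
Proof.
move=> Uq Us hq xy; rewrite /box_weight (bigID (mem s)) /= addrC; congr (_ + _)%R.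
rewrite -(@big_mem_supp _ q s (fun b => h b.1 b.2) Uq Us); last by case=> a c /hq.
rewrite -sumrMnr big_seq_cond [RHS]big_seq_cond.
by apply: eq_bigr => b /andP[qb sb]; rewrite xy.
Qed.

Lemma rect_sum_rcons T p b a c : rect_sum T (rcons p b) a c =
  rect_sum T p a c + (if (b.1 <= a) && (b.2 <= c) then T b.1 b.2 else 0).
Proof. by rewrite /rect_sum big_rcons. Qed.

Record toggle_inv (T : nat -> nat -> nat) (p : seq (nat * nat)) (f : nat -> nat -> nat) :
  Prop := ToggleInv {
  inv_supp : forall a c, (a, c) \notin p -> f a c = 0;
  inv_rpp : forall a c, (a, c) \in p -> f a.-1 c <= f a c /\ f a c.-1 <= f a c;
  inv_diag : forall a c, (a, c) \in p -> (a.+1, c.+1) \notin p ->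
    diag_sum f a c = rect_sum T p a c }.

Section ToggleStep.
Variables (R : zmodType) (x : int -> R).
Variables (T : nat -> nat -> nat) (p : seq (nat * nat)) (f : nat -> nat -> nat) (i j : nat).
Hypotheses (Up : uniq p) (Yp : young_seq p) (pij : (i, j) \notin p).
Hypotheses (Yp' : young_seq (rcons p (i, j))) (inv : toggle_inv T p f).

Local Notation p' := (rcons p (i, j)).
Local Notation f' := (toggle_step p f (i, j) (T i j)).
Local Notation toggled a c := [&& 0 < a, 0 < c, a < i & i - a == j - c].
Local Notation hook_sum := (\sum_(b <- p | in_hook b.1 b.2 (i, j)) T b.1 b.2).
Local Notation diag_boxes := [seq (i - k, j - k) | k <- iota 0 i].

Lemma mem_p' b : (b \in p') = (b == (i, j)) || (b \in p).
Proof. by rewrite mem_rcons in_cons. Qed.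

Lemma corner_pos : 0 < i /\ 0 < j.
Proof. by apply: (young_pos Yp'); rewrite mem_p' eqxx. Qed.

Lemma le_corner_mem a c :
  0 < a <= i -> 0 < c <= j -> ~~ ((a == i) && (c == j)) -> (a, c) \in p.
Proof.
move=> ha hc ne; have /(youngP Yp')[_ _ up left] : (i, j) \in p' by rewrite mem_p' eqxx.
have {}up : 1 < i -> (i.-1, j) \in p.
  move=> i1; case/orP: up => [/eqP | ]; first lia.
  by rewrite mem_p' xpair_eqE => /orP[/andP[/eqP] | //]; lia.
have {}left : 1 < j -> (i, j.-1) \in p.
  move=> j1; case/orP: left => [/eqP | ]; first lia.
  by rewrite mem_p' xpair_eqE => /orP[/andP[_ /eqP] | //]; lia.
have [lt_ai | ge_ai] := ltnP a i.
  by apply: (young_closed Yp (up _)); lia.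
have lt_cj : c < j by lia.
by apply: (young_closed Yp (left _)); lia.
Qed.

Lemma mem_not_ge_corner a c : (a, c) \in p -> ~~ ((i <= a) && (j <= c)).
Proof.
move=> pac; apply/negP => /andP[le_ia le_jc]; have [i0 j0] := corner_pos.
by move: pij; rewrite (young_closed Yp pac) //; lia.
Qed.

Lemma toggleE a c : f' a c =
  if (a == i) && (c == j) then maxn (f i.-1 j) (f i j.-1) + T i j
  else if toggled a c then
    maxn (f a.-1 c) (f a c.-1) + minn (f a c.+1) (f a.+1 c) - f a c
  else f a c.
Proof.
have get_f a' c' : (if (a', c') \in p then f a' c' else 0) = f a' c'.
  by case: ifPn => // /(inv_supp inv) ->.
by rewrite /toggle_step /= !get_f.
Qed.

Lemma toggle_corner : f' i j = maxn (f i.-1 j) (f i j.-1) + T i j.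
Proof. by rewrite toggleE !eqxx. Qed.

Lemma toggle_other a c : ~~ ((a == i) && (c == j)) -> ~~ toggled a c -> f' a c = f a c.
Proof. by move=> ne ntog; rewrite toggleE (negbTE ne) (negbTE ntog). Qed.

Lemma toggle_supp a c : (a, c) \notin p' -> f' a c = 0.
Proof.
rewrite mem_p' negb_or xpair_eqE => /andP[ne npac].
rewrite toggle_other ?(inv_supp inv) //; apply: contra npac => tog.
by apply: le_corner_mem; lia.
Qed.

Let f_row0 := young_supp_row0 Yp (inv_supp inv).
Let f_col0 := young_supp_col0 Yp (inv_supp inv).
Let f'_row0 := young_supp_row0 Yp' toggle_supp.
Let f'_col0 := young_supp_col0 Yp' toggle_supp.

Lemma toggled_bounds a c : toggled a c ->
  maxn (f a.-1 c) (f a c.-1) <= f a c <= minn (f a.+1 c) (f a c.+1).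
Proof.
move=> tog.
have pac : (a, c) \in p by apply: le_corner_mem; lia.
have pa1c : (a.+1, c) \in p by apply: le_corner_mem; lia.
have pac1 : (a, c.+1) \in p by apply: le_corner_mem; lia.
have [up left] := inv_rpp inv pac; have [/= down _] := inv_rpp inv pa1c.
by have [_ /= right] := inv_rpp inv pac1; lia.
Qed.

Lemma toggle_bounds a c : toggled a c ->
  maxn (f a.-1 c) (f a c.-1) <= f' a c <= minn (f a.+1 c) (f a c.+1).
Proof.
move=> tog; have := toggled_bounds tog.
by rewrite toggleE tog (_ : (a == i) = false) /=; [lia | apply/eqP; lia].
Qed.

Lemma toggle_rpp a c : (a, c) \in p' -> f' a.-1 c <= f' a c /\ f' a c.-1 <= f' a c.
Proof.
have [i0 j0] := corner_pos.
rewrite mem_p' xpair_eqE => /orP[/andP[/eqP-> /eqP->] | pac].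
  by rewrite toggle_corner !toggle_other; lia.
have [a0 c0] := young_pos Yp pac.
have ne : ~~ ((a == i) && (c == j)) by apply: contraNN pij => /andP[/eqP<- /eqP<-].
have [tog | ntog] := boolP (toggled a c).
  have := toggle_bounds tog.
  by rewrite [f' a.-1 c]toggle_other ?[f' a c.-1]toggle_other; lia.
have [up left] := inv_rpp inv pac; have far := mem_not_ge_corner pac.
rewrite [f' a c]toggle_other //; split.
- have [tog' | ntog'] := boolP (toggled a.-1 c).
    by have := toggle_bounds tog'; rewrite prednK //; lia.
  by rewrite toggle_other //; lia.
- have [tog' | ntog'] := boolP (toggled a c.-1).
    by have := toggle_bounds tog'; rewrite prednK //; lia.
  by rewrite toggle_other //; lia.
Qed.

Lemma diag_rect_near_corner a c : a <= i <= a.+1 -> c <= j <= c.+1 ->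
  ~~ ((a == i) && (c == j)) -> diag_sum f a c = rect_sum T p a c.
Proof.
move=> ha hc ne; have [a0c0 | [a0 c0]] : (a = 0 \/ c = 0) \/ (0 < a /\ 0 < c) by lia.
  rewrite (diag_sum_boundary f_col0 a0c0) /rect_sum big1_seq // => -[u v].
  by move=> /andP[/= le /(young_pos Yp) /= [u0 v0]]; lia.
apply: (inv_diag inv); first by apply: le_corner_mem; lia.
apply/negP => pa1c1; have := mem_not_ge_corner pa1c1.
case: (boolP ((a.+1 == i) && (c.+1 == j))) => [/andP[/eqP ea /eqP ec] | ne1]; last by lia.
by move: pij; rewrite -ea -ec pa1c1.
Qed.

Lemma rect_sum_corner : rect_sum T p i j = hook_sum + rect_sum T p i.-1 j.-1.
Proof.
rewrite /rect_sum !(big_mkcond _ (fun b => T b.1 b.2)) /= -big_split /=.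
apply: eq_big_seq => -[u v] puv /=.
have [u0 v0] := young_pos Yp puv; rewrite /in_hook /=.
by do 3 (case: ifP => ?); lia.
Qed.

Lemma rect_sum_incl_excl :
  rect_sum T p i.-1 j + rect_sum T p i j.-1 = hook_sum + 2 * rect_sum T p i.-1 j.-1.
Proof.
rewrite /rect_sum !(big_mkcond _ (fun b => T b.1 b.2)) /= big_distrr -!big_split /=.
apply: eq_big_seq => -[u v] puv /=.
have ne : ~~ ((u == i) && (v == j)) by apply: contraNN pij => /andP[/eqP<- /eqP<-].
have [u0 v0] := young_pos Yp puv; rewrite /in_hook /=.
by do 4 (case: ifP => ?); lia.
Qed.

Lemma toggle_diag_pair k :
  f' (i - k.+1) (j - k.+1) + f (i - k.+1) (j - k.+1) =
  maxn (f (i - k.+2) (j - k.+1)) (f (i - k.+1) (j - k.+2)) +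
  minn (f (i - k.+1) (j - k)) (f (i - k) (j - k.+1)).
Proof.
have [i0 j0] := corner_pos.
have [tog | ntog] := boolP (toggled (i - k.+1) (j - k.+1)).
  have := toggled_bounds tog; rewrite toggleE tog (_ : (i - k.+1 == i) = false) /=; last first.
    by apply/eqP; lia.
  have [-> -> -> ->] : [/\ (i - k.+1).-1 = i - k.+2, (j - k.+1).-1 = j - k.+2,
    (i - k.+1).+1 = i - k & (j - k.+1).+1 = j - k] by split; lia.
  by lia.
have [ik | jk] : i - k.+1 = 0 \/ j - k.+1 = 0 by lia.
  by rewrite ik (_ : i - k.+2 = 0) ?f'_row0 ?f_row0 //; lia.
by rewrite jk (_ : j - k.+2 = 0) ?f'_col0 ?f_col0 //; lia.
Qed.

Lemma diag_sum_toggle :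
  diag_sum f' i j + diag_sum f i.-1 j.-1 = T i j + diag_sum f i.-1 j + diag_sum f i j.-1.
Proof.
rewrite (diag_sum_recl f'_row0) toggle_corner (diag_sum_upleft f'_row0).
rewrite (diag_sum_upleft f_row0) (diag_sum_up f_row0) diag_sum_left -addnA -big_split /=.
under eq_bigr do rewrite toggle_diag_pair.
have tele := @telescope_maxn_minn (fun k => f (i - k.+1) (j - k))
  (fun k => f (i - k) (j - k.+1)) i.
rewrite /= !subn0 !subn1 subnS !subnn f_row0 in tele.
by rewrite addnAC tele // big_split addnC addnA.
Qed.

Lemma diag_sum_corner : diag_sum f' i j = T i j + hook_sum + diag_sum f i.-1 j.-1.
Proof.
have [i0 j0] := corner_pos.
have := diag_sum_toggle; have := rect_sum_incl_excl.
have d1 : diag_sum f i.-1 j.-1 = rect_sum T p i.-1 j.-1 by apply: diag_rect_near_corner; lia.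
have d2 : diag_sum f i.-1 j = rect_sum T p i.-1 j by apply: diag_rect_near_corner; lia.
have d3 : diag_sum f i j.-1 = rect_sum T p i j.-1 by apply: diag_rect_near_corner; lia.
by rewrite d1 d2 d3; lia.
Qed.

Lemma diag_sum_toggle_off a c : (a, c) \in p -> (a.+1, c.+1) \notin p' ->
  diag_sum f' a c = diag_sum f a c.
Proof.
move=> pac end_ac; have far := mem_not_ge_corner pac.
apply: eq_bigr => k _; apply: toggle_other; first by lia.
apply/negP => tog; have lt_ai : a < i by lia.
move: end_ac; rewrite mem_p' xpair_eqE.
case: (boolP ((a.+1 == i) && (c.+1 == j))) => //= ne1.
by rewrite le_corner_mem //; lia.
Qed.

Lemma toggle_inv_step : toggle_inv T p' f'.
Proof.
split; [exact: toggle_supp | exact: toggle_rpp |].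
move=> a c; rewrite mem_p' xpair_eqE => /orP[/andP[/eqP-> /eqP->] _ | pac end_ac].
  have [i0 j0] := corner_pos.
  rewrite diag_sum_corner rect_sum_rcons /= !leqnn /= rect_sum_corner.
  by rewrite diag_rect_near_corner; lia.
rewrite diag_sum_toggle_off // rect_sum_rcons /= (negbTE (mem_not_ge_corner pac)) addn0.
by apply: (inv_diag inv) => //; apply: contra end_ac; rewrite mem_p' => ->; rewrite orbT.
Qed.

Lemma box_weight_step :
  box_weight x p' f' = (box_weight x p f + xc x (i, j) *+ (T i j + hook_sum))%R.
Proof.
have [i0 j0] := corner_pos.
have Up' : uniq p' by rewrite rcons_uniq pij Up.
have Ud : uniq diag_boxes.
  rewrite map_inj_in_uniq ?iota_uniq // => k l.
  by rewrite !mem_iota => /andP[_ hk] /andP[_ hl] []; lia.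
have xc_diag b : b \in p' -> b \in diag_boxes -> xc x b = xc x (i, j).
  case: b => a c /(young_pos Yp')[a0 c0] /mapP[k]; rewrite mem_iota => /andP[_ hk] [ea ec].
  by rewrite /xc /=; congr x; lia.
have diagE g : diag_sum g i j = \sum_(b <- diag_boxes) g b.1 b.2.
  by rewrite big_map /diag_sum /index_iota subn0.
have f_supp' a c : (a, c) \notin p' -> f a c = 0.
  by rewrite mem_p' negb_or => /andP[_]; exact: (inv_supp inv).
have off_diag b : b \notin diag_boxes -> f' b.1 b.2 = f b.1 b.2.
  case: b => a c /= off; apply: toggle_other; apply: contra off => on_diag; apply/mapP.
    by exists 0; rewrite ?mem_iota ?subn0 //; case/andP: on_diag => /eqP-> /eqP->.
  by exists (i - a); [rewrite mem_iota; lia | congr (_, _); lia].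
have -> : box_weight x p f = box_weight x p' f.
  by rewrite /box_weight big_rcons /= (inv_supp inv pij) addr0.
rewrite (box_weight_split Up' Ud toggle_supp xc_diag).
rewrite (box_weight_split Up' Ud f_supp' xc_diag) -!diagE diag_sum_corner.
rewrite [diag_sum f i j](diag_sum_recl f_row0) (inv_supp inv pij) add0n.
have -> : (\sum_(b <- p' | b \notin diag_boxes) xc x b *+ f' b.1 b.2 =
           \sum_(b <- p' | b \notin diag_boxes) xc x b *+ f b.1 b.2)%R.
  by apply: eq_bigr => b off; rewrite off_diag.
by rewrite -addrA -mulrnDr addnC.
Qed.

Lemma hook_weight_step :
  hook_weight x p' T = (hook_weight x p T + xc x (i, j) *+ (T i j + hook_sum))%R.
Proof.
have hook_corner : (\sum_(b <- p' | in_hook i j b) xc x b = xc x (i, j))%R.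
  rewrite big_rcons /in_hook /= !eqxx !leqnn /= big1_seq ?add0r // => -[a c] /=.
  by move=> /andP[hook /mem_not_ge_corner]; lia.
rewrite /hook_weight big_rcons /= hook_corner.
under eq_bigr do rewrite big_rcons mulrnDl.
rewrite big_split /= -addrA; congr (_ + _)%R.
rewrite mulrnDr addrC; congr (_ + _)%R.
rewrite -sumrMnr [RHS]big_mkcond /=; apply: eq_bigr => b _.
by case: ifP; rewrite ?mul0rn.
Qed.

End ToggleStep.

Lemma toggle_rec_weight (R : zmodType) (x : int -> R) T p f s :
  uniq (p ++ s) -> (forall n, young_seq (take n (p ++ s))) ->
  toggle_inv T p f -> box_weight x p f = hook_weight x p T ->
  box_weight x (p ++ s) (toggle_rec p f s T) = hook_weight x (p ++ s) T.
Proof.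
elim: s p f => [|[i j] s IHs] p f Us Ys inv wE /=; first by rewrite cats0.
have Yp : young_seq p by have := Ys (size p); rewrite take_size_cat.
have Yp' : young_seq (rcons p (i, j)).
  by have := Ys (size p).+1; rewrite -cat_rcons take_size_cat ?size_rcons.
move: Us Ys; rewrite -cat_rcons => Us Ys.
have /andP[pij Up] : ((i, j) \notin p) && uniq p.
  by move: Us; rewrite cat_uniq rcons_uniq => /andP[].
apply: IHs => //; first exact: toggle_inv_step.
by rewrite box_weight_step // hook_weight_step // wE.
Qed.

Unset Implicit Arguments.
Local Open Scope ring_scope.

Theorem proposition3p3 (R : zmodType) (x : int -> R) (la : seq nat)
  (T : nat -> nat -> nat) (s : seq (nat * nat)) :
  is_partition la -> building_seq la s ->
  weight x la (toggle s T) = \sum_(b <- boxes la) hooklen x la b.1 b.2 *+ T b.1 b.2.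
Proof.
move=> _ [Us [perm_s Ys]].
have inv0 : toggle_inv T [::] (fun _ _ => 0%N) by split.
have := toggle_rec_weight (x := x) (p := [::]) Us Ys inv0.
rewrite /box_weight /hook_weight !big_nil => /(_ erefl).
rewrite /weight /hooklen -(perm_big _ perm_s) => ->.
by rewrite -(perm_big _ perm_s); apply: eq_bigr => b _; rewrite (perm_big _ perm_s).
Qed.
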